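(* For every $n\ge 8$, the Pachner graph $\mathcal{S}_n$ of $n$-vertex stacked $2$-spheres is disconnected.
   Context: A triangulated $2$-sphere is a finite simplicial complex whose geometric realization is homeomorphic to the $2$-sphere. Edge flip $ab\mapsto cd$: if $abc,abd$ are triangles and $cd$ is not an edge, replace $abc,abd$ by $acd,bcd$. A stacked $3$-ball is a simplicial complex obtained from a single tetrahedron by repeatedly gluing a new tetrahedron along exactly one boundary triangle, introducing one new vertex each time. A stacked $2$-sphere is a triangulated $2$-sphere isomorphic to the boundary of a stacked $3$-ball. $\mathcal{S}_n$ is the graph whose nodes are the isomorphism classes of $n$-vertex stacked $2$-spheres, two nodes being adjacent iff a representative of one can be transformed into a representative of the other by a single edge flip. *)

From Stdlib Require Import Relations.
From HB Require Import structures.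
From mathcomp Require Import all_boot all_fingroup.
Set Implicit Arguments. Unset Strict Implicit. Unset Printing Implicit Defensive.

(* A pure simplicial complex is represented by its set of facets.
   Tetrahedra are 4-element vertex sets, triangles 3-element vertex sets. *)

Section Complexes.
Variable T : finType.

Definition boundary (B : {set {set T}}) : {set {set T}} :=
  [set s : {set T} | (#|s| == 3) && (#|[set t in B | s \subset t]| == 1)].

Definition vertices (K : {set {set T}}) : {set T} := \bigcup_(t in K) t.

Inductive stacked_ball : {set {set T}} -> Prop :=
| sb_base (t : {set T}) : #|t| = 4 -> stacked_ball [set t]
| sb_glue (B : {set {set T}}) (s : {set T}) (v : T) :
    stacked_ball B -> s \in boundary B -> v \notin vertices B ->
    stacked_ball (v |: s |: B).

Definition is_edge (S : {set {set T}}) (e : {set T}) :=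
  exists2 t, t \in S & e \subset t.

Definition flip (S S' : {set {set T}}) : Prop :=
  exists a b c d : T,
    [/\ uniq [:: a; b; c; d],
        [set a; b; c] \in S, [set a; b; d] \in S,
        ~ is_edge S [set c; d] &
        S' = [set a; c; d] |: ([set b; c; d] |: ((S :\ [set a; b; c]) :\ [set a; b; d]))].
End Complexes.

(* n-vertex stacked 2-spheres on the vertex set 'I_n: boundaries of stacked
   3-balls using all n vertices (every n-vertex stacked 2-sphere is isomorphic
   to one of these) *)
Definition stacked_sphere (n : nat) (S : {set {set 'I_n}}) : Prop :=
  exists2 B, stacked_ball B & (vertices B = setT /\ S = boundary B).

Definition iso_cx (n : nat) (S S' : {set {set 'I_n}}) : Prop :=
  exists f : {perm 'I_n}, S' = [set [set f x | x in t] | t : {set 'I_n} in S].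

(* adjacency in S_n, lifted to representatives *)
Definition Sn_adj (n : nat) (S S' : {set {set 'I_n}}) : Prop :=
  [/\ stacked_sphere S, stacked_sphere S' &
      exists X X', [/\ iso_cx S X, iso_cx S' X' & flip X X']].

Definition Sn_connected (n : nat) (S S' : {set {set 'I_n}}) : Prop :=
  clos_refl_trans _ (@Sn_adj n) S S'.

From Stdlib Require Import Relations.
From HB Require Import structures.
From mathcomp Require Import all_boot all_fingroup zify.
Set Implicit Arguments. Unset Strict Implicit. Unset Printing Implicit Defensive.

(* The invariant separating two components of S_n is the existence of an empty
   tetrahedron: four pairwise adjacent vertices spanning no triangle.  The graph
   of a stacked sphere has no K5 and no induced 4-cycle, and each edge lies in at
   most two triangles, since all three properties survive stacking.  Under a flip
   ab -> cd an empty tetrahedron Q not containing both a and b stays empty; if Q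
   contains a and b, then either c is adjacent to all of Q (a K5) or some x in Q
   is not, and a c b x becomes an induced 4-cycle after the flip.  Capping all
   four faces of a tetrahedron produces an empty tetrahedron.  Conversely every
   4-clique of a stacked sphere spans a tetrahedron of the ball, so a fan of
   tetrahedra which all keep a face on the boundary has no empty tetrahedron. *)

Section StackedBalls.
Variable T : finType.
Implicit Types (B S : {set {set T}}) (s t f Q : {set T}) (u v w x y z : T).

Definition adj S x y := [exists f in S, (x \in f) && (y \in f)].

Definition clique S Q := {in Q &, forall x y, adj S x y}.

Definition cliques_le4 S := forall Q, clique S Q -> #|Q| <= 4.

Definition four_cycles_chorded S := forall w x y z,
  adj S w x -> adj S x y -> adj S y z -> adj S z w -> adj S w y || adj S x z.

Definition edge_deg_le2 S := forall x y, x != y ->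
  #|[set f in S | (x \in f) && (y \in f)]| <= 2.

Definition K4_tetrahedra B := forall Q, #|Q| = 4 -> clique (boundary B) Q -> Q \in B.

Definition empty_tetrahedron_at S Q :=
  [/\ #|Q| = 4, clique S Q & forall f, f \in S -> ~~ (f \subset Q)].

Definition empty_tetrahedron S := exists Q, empty_tetrahedron_at S Q.

Definition exposed_avoiding u B := forall t, t \in B ->
  exists2 f, f \in boundary B & (f \subset t) && (u \notin f).

Lemma adjP S x y :
  reflect (exists2 f, f \in S & (x \in f) && (y \in f)) (adj S x y).
Proof. exact: exists_inP. Qed.

Lemma adj_in S f x y : f \in S -> x \in f -> y \in f -> adj S x y.
Proof. by move=> fS xf yf; apply/adjP; exists f; rewrite ?xf. Qed.

Lemma adjC S x y : adj S x y = adj S y x.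
Proof. by apply/adjP/adjP=> -[f fS /andP[? ?]]; exists f; rewrite // andbC; apply/andP. Qed.

Lemma vertP B x : reflect (exists2 t, t \in B & x \in t) (x \in vertices B).
Proof. exact: bigcupP. Qed.

Lemma vertices_glue B s v : vertices ((v |: s) |: B) = (v |: s) :|: vertices B.
Proof. by rewrite /vertices bigcup_setU big_set1. Qed.

Lemma boundary_card B f : f \in boundary B -> #|f| = 3.
Proof. by rewrite inE => /andP[/eqP]. Qed.

Lemma boundary_sub B f : f \in boundary B -> exists2 t, t \in B & f \subset t.
Proof.
rewrite inE => /andP[_ /eqP one]; have /set0Pn[t] : [set t in B | f \subset t] != set0.
  by rewrite -card_gt0 one.
by rewrite inE => /andP[tB ft]; exists t.
Qed.

Lemma boundary_vertex B f x : f \in boundary B -> x \in f -> x \in vertices B.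
Proof. by case/boundary_sub=> t tB /subsetP ft /ft xt; apply/vertP; exists t. Qed.

Lemma adj_vertex B x y : adj (boundary B) x y -> x \in vertices B.
Proof. by case/adjP=> f fB /andP[xf _]; exact: boundary_vertex fB xf. Qed.

Lemma eq_set_card (A C : {set T}) : A \subset C -> #|C| <= #|A| -> A = C.
Proof. by move=> subAC leCA; apply/eqP; rewrite eqEcard subAC. Qed.

Lemma subset_setD1 (A f : {set T}) :
  f \subset A -> #|A| = #|f|.+1 -> exists2 z, z \in A & f = A :\ z.
Proof.
move=> fA cardA; have /set0Pn[z] : A :\: f != set0.
  by rewrite -card_gt0 cardsD (setIidPr fA) cardA subSnn.
rewrite inE => /andP[zf zA]; exists z => //; apply: eq_set_card.
  apply/subsetP=> x xf; rewrite !inE (subsetP fA x xf) andbT.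
  by apply: contraNneq zf => <-.
by move: cardA; rewrite (cardsD1 z A) zA add1n => -[->].
Qed.

Lemma notin_pair (A : {set T}) x y : 2 < #|A| -> exists2 z, z \in A & z \notin [set x; y].
Proof.
move=> A_gt2; apply/subsetPn; apply: contraTN A_gt2 => /subset_leq_card.
by rewrite -leqNgt => /leq_trans; apply; rewrite cards2; case: (_ != _).
Qed.

Lemma card_triangles_through (A : {set T}) x y : #|A| = 4 -> x != y ->
  #|[set f : {set T} | [&& #|f| == 3, f \subset A, x \in f & y \in f]]| <= 2.
Proof.
move=> cardA xy; have [/andP[xA yA] | xyA] := boolP ((x \in A) && (y \in A)); last first.
  rewrite (_ : [set f | _] = set0) ?cards0 //; apply/setP=> f; rewrite !inE.
  by apply: contraNF xyA => /and4P[_ /subsetP fA /fA -> /fA ->].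
apply: (@leq_trans #|A :\: [set x; y]|); last first.
  by rewrite cardsD cardA (setIidPr _) ?cards2 ?xy // subUset !sub1set xA.
apply: leq_trans (leq_imset_card (fun z => A :\ z) _); apply: subset_leq_card.
apply/subsetP=> f; rewrite inE => /and4P[/eqP cardf fA xf yf].
move: xf yf; have [z zA ->] := subset_setD1 fA (etrans cardA (congr1 S (esym cardf))).
rewrite !inE => /andP[xz _] /andP[yz _].
by apply/imsetP; exists z; rewrite // !inE zA andbT negb_or eq_sym xz eq_sym yz.
Qed.

Section Base.
Variable t : {set T}.
Hypothesis cardt : #|t| = 4.

Lemma boundary_base f : (f \in boundary [set t]) = (#|f| == 3) && (f \subset t).
Proof.
rewrite inE (_ : [set u in [set t] | f \subset u] = if f \subset t then [set t] else set0).
  by case: ifP; rewrite ?cards1 ?cards0 ?andbT ?andbF.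
by apply/setP=> u; rewrite !inE; case: ifP; rewrite ?inE; case: eqP => // ->.
Qed.

Lemma adj_base x y : adj (boundary [set t]) x y = (x \in t) && (y \in t).
Proof.
apply/adjP/andP=> [[f] | [xt yt]].
  by rewrite boundary_base => /andP[_ /subsetP ft] /andP[/ft ? /ft ?].
have t_gt2 : 2 < #|t| by rewrite cardt.
have [z zt] := notin_pair x y t_gt2; rewrite !inE negb_or.
case/andP=> zx zy; exists (t :\ z); last by rewrite !inE xt yt eq_sym zx eq_sym zy.
by rewrite boundary_base subsetDl andbT; move: cardt; rewrite (cardsD1 z t) zt add1n => -[->].
Qed.

Lemma clique_base Q : clique (boundary [set t]) Q -> Q \subset t.
Proof. by move=> clQ; apply/subsetP=> x xQ; have := clQ x x xQ xQ; rewrite adj_base andbb. Qed.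

Lemma base_cliques_le4 : cliques_le4 (boundary [set t]).
Proof. by move=> Q /clique_base/subset_leq_card; rewrite cardt. Qed.

Lemma base_four_cycles_chorded : four_cycles_chorded (boundary [set t]).
Proof. by move=> w x y z; rewrite !adj_base => /andP[-> _] /andP[_ ->]. Qed.

Lemma base_edge_deg_le2 : edge_deg_le2 (boundary [set t]).
Proof.
move=> x y xy; apply: leq_trans (card_triangles_through cardt xy).
apply: subset_leq_card; apply/subsetP=> f; rewrite inE boundary_base.
by rewrite inE -!andbA.
Qed.

Lemma base_K4_tetrahedra : K4_tetrahedra [set t].
Proof.
move=> Q cardQ /clique_base Qt; rewrite (eq_set_card Qt) ?set11 //.
by rewrite cardt cardQ.
Qed.

End Base.

Section Glue.
Variables (B : {set {set T}}) (s : {set T}) (v : T).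
Hypotheses (sB : s \in boundary B) (vB : v \notin vertices B).
Local Notation B' := ((v |: s) |: B).

Lemma glue_vertex_notin : v \notin s.
Proof. by apply: contra vB; exact: boundary_vertex sB. Qed.

Lemma glue_tetrahedron_notin : v |: s \notin B.
Proof. by apply: contra vB => tB; apply/vertP; exists (v |: s); rewrite ?setU11. Qed.

Lemma card_glue : #|v |: s| = 4.
Proof. by rewrite cardsU1 glue_vertex_notin (boundary_card sB). Qed.

Lemma boundary_glue f : (f \in boundary B') =
  ((#|f| == 3) && (v \in f) && (f \subset v |: s)) || ((f \in boundary B) && (f != s)).
Proof.
rewrite [in LHS]inE; have -> : [set t in B' | f \subset t] =
    if f \subset v |: s then (v |: s) |: [set t in B | f \subset t] else [set t in B | f \subset t].
  apply/setP=> t; rewrite !inE; case: ifP => fvs; rewrite ?inE.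
    by case: eqP => [->|] //=; rewrite fvs.
  by case: eqP => [->|] //=; rewrite fvs andbF.
rewrite [f \in boundary B]inE; case: ifP => fvs; last first.
  have -> : f != s by apply: contraFneq fvs => ->; exact: subsetUr.
  by rewrite andbF andbT.
rewrite cardsU1 inE (negbTE glue_tetrahedron_notin) andbT add1n eqSS.
case vf: (v \in f).
  have -> : [set t in B | f \subset t] = set0.
    apply/setP=> t; rewrite !inE; apply/negbTE/negP => /andP[tB /subsetP ft].
    by case/negP: vB; apply/vertP; exists t; rewrite ?ft.
  by rewrite cards0 andbT; case: (#|f| == 3).
have fs : f \subset s.
  apply/subsetP=> x xf; move: (subsetP fvs x xf); rewrite !inE => /orP[/eqP xv | //].
  by rewrite -xv xf in vf.
rewrite andbF /=; apply/andP/andP=> [[/eqP cardf] | [/andP[/eqP cardf _]]].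
  have -> : f = s by rewrite (eq_set_card fs) ?cardf ?(boundary_card sB).
  by move: sB; rewrite inE => /andP[_ /eqP->].
by rewrite eqEcard fs cardf (boundary_card sB).
Qed.

Lemma boundary_glue_new f : f \in boundary B' -> v \in f -> f \subset v |: s.
Proof.
rewrite boundary_glue => /orP[/andP[] // | /andP[/boundary_vertex fv _] /fv].
by rewrite (negbTE vB).
Qed.

Lemma boundary_glue_old f : f \in boundary B' -> v \notin f -> (f \in boundary B) && (f != s).
Proof. by rewrite boundary_glue => /orP[/andP[/andP[_ ->]] | ]. Qed.

Lemma boundary_glue_keep f : f \in boundary B -> f != s -> f \in boundary B'.
Proof. by move=> fB fs; rewrite boundary_glue fB fs orbT. Qed.

Lemma boundary_glue_face z : z \in s -> (v |: s) :\ z \in boundary B'.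
Proof.
move=> zs; have vz : v != z by apply: contraNneq glue_vertex_notin => ->.
have := cardsD1 z (v |: s); rewrite card_glue in_setU1 zs orbT add1n => -[cardf].
by rewrite boundary_glue -cardf eqxx subsetDl !inE eqxx vz.
Qed.

Lemma adj_glue_new x y : x \in v |: s -> y \in v |: s -> adj (boundary B') x y.
Proof.
move=> xvs yvs; have s_gt2 : 2 < #|s| by rewrite (boundary_card sB).
have [z zs] := notin_pair x y s_gt2; rewrite !inE negb_or => /andP[zx zy].
by apply: adj_in (boundary_glue_face zs) _ _; rewrite in_setD1 ?xvs ?yvs andbT eq_sym.
Qed.

Lemma adj_glue_mono x y : adj (boundary B) x y -> adj (boundary B') x y.
Proof.
case/adjP=> f fB /andP[xf yf]; have [fs | fs] := eqVneq f s.
  by rewrite fs in xf yf; apply: adj_glue_new; rewrite inE ?xf ?yf orbT.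
exact: adj_in (boundary_glue_keep fB fs) xf yf.
Qed.

Lemma adj_glue x y : adj (boundary B') x y ->
  adj (boundary B) x y || (x \in v |: s) && (y \in v |: s).
Proof.
case/adjP=> f fB' /andP[xf yf]; case vf: (v \in f).
  by have /subsetP fvs := boundary_glue_new fB' vf; rewrite !fvs ?orbT.
by have /andP[fB _] := boundary_glue_old fB' (negbT vf); rewrite (adj_in fB xf yf).
Qed.

Lemma adj_glue_vertex x : adj (boundary B') v x -> x \in v |: s.
Proof. by case/adj_glue/orP=> [/adj_vertex | /andP[]//]; rewrite (negbTE vB). Qed.

Lemma adj_glue_old x y : x != v -> y != v -> adj (boundary B') x y -> adj (boundary B) x y.
Proof.
move=> xv yv /adj_glue/orP[// | ]; rewrite !inE (negbTE xv) (negbTE yv) /=.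
by case/andP; exact: adj_in sB.
Qed.

Lemma clique_glue_old Q : v \notin Q -> clique (boundary B') Q -> clique (boundary B) Q.
Proof.
move=> vQ clQ x y xQ yQ; apply: adj_glue_old (clQ x y xQ yQ).
  by apply: contraNneq vQ => <-.
by apply: contraNneq vQ => <-.
Qed.

Lemma clique_glue_vertex Q : v \in Q -> clique (boundary B') Q -> Q \subset v |: s.
Proof. by move=> vQ clQ; apply/subsetP=> x xQ; exact: adj_glue_vertex (clQ v x vQ xQ). Qed.

Lemma glue_cliques_le4 : cliques_le4 (boundary B) -> cliques_le4 (boundary B').
Proof.
move=> le4B Q clQ; have [vQ | vQ] := boolP (v \in Q).
  by rewrite -card_glue subset_leq_card // clique_glue_vertex.
exact: le4B (clique_glue_old vQ clQ).
Qed.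

Lemma glue_K4_tetrahedra : K4_tetrahedra B -> K4_tetrahedra B'.
Proof.
move=> K4B Q cardQ clQ; have [vQ | vQ] := boolP (v \in Q).
  by rewrite (eq_set_card (clique_glue_vertex vQ clQ)) ?setU11 ?card_glue ?cardQ.
by rewrite inE (K4B Q cardQ (clique_glue_old vQ clQ)) orbT.
Qed.

Lemma glue_four_cycles_chorded :
  four_cycles_chorded (boundary B) -> four_cycles_chorded (boundary B').
Proof.
move=> chB w x y z wx xy yz zw.
have link p q : adj (boundary B') v p -> adj (boundary B') q v -> adj (boundary B') p q.
  by rewrite [adj _ q v]adjC => /adj_glue_vertex vp /adj_glue_vertex vq; exact: adj_glue_new.
have [wv | wv] := eqVneq w v; first by rewrite wv in wx zw; rewrite (link x z wx zw) orbT.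
have [xv | xv] := eqVneq x v.
  by rewrite xv in wx xy; rewrite [adj _ w y]adjC (link y w xy wx).
have [yv | yv] := eqVneq y v.
  by rewrite yv in xy yz; rewrite [adj _ x z]adjC (link z x yz xy) orbT.
have [zv | zv] := eqVneq z v; first by rewrite zv in yz zw; rewrite (link w y zw yz).
case/orP: (chB w x y z (adj_glue_old wv xv wx) (adj_glue_old xv yv xy)
  (adj_glue_old yv zv yz) (adj_glue_old zv wv zw)) => /adj_glue_mono ->; by rewrite ?orbT.
Qed.

(* Through an edge xy avoiding v the only new triangle is vxy, and it exists only
   when x, y lie in the face s it replaces; so f |-> (if v \in f then s else f)
   embeds the triangles of B' through xy into those of B. *)
Lemma glue_edge_deg_le2 : edge_deg_le2 (boundary B) -> edge_deg_le2 (boundary B').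
Proof.
move=> degB x y xy; set N' := [set f in boundary B' | (x \in f) && (y \in f)].
have [vxy | vxy] := boolP (v \in [set x; y]).
  apply: leq_trans (card_triangles_through card_glue xy); apply: subset_leq_card.
  apply/subsetP=> f; rewrite inE => /andP[fB' xyf].
  rewrite inE (boundary_card fB') eqxx xyf andbT /=; apply: boundary_glue_new fB' _.
  by case/andP: xyf; case/set2P: vxy => -> .
have face_v f : f \in N' -> v \in f -> f = v |: [set x; y].
  move=> /setIdP[fB' /andP[xf yf]] vf; apply/esym/eq_set_card.
    by rewrite subUset sub1set vf subUset !sub1set xf yf.
  by rewrite (boundary_card fB') cardsU1 vxy cards2 xy.
pose g f := if v \in f then s else f.
have g_inj : {in N' &, injective g}.
  move=> f1 f2 f1N f2N; rewrite /g.
  case: ifP => v1; case: ifP => v2 //; first by rewrite (face_v f1 f1N v1) (face_v f2 f2N v2).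
    by move=> sf2; case/setIdP: f2N => /boundary_glue_old/(_ (negbT v2)); rewrite -sf2 eqxx andbF.
  by move=> f1s; case/setIdP: f1N => /boundary_glue_old/(_ (negbT v1)); rewrite f1s eqxx andbF.
rewrite -(card_in_imset g_inj); apply: leq_trans (degB x y xy); apply: subset_leq_card.
apply/subsetP=> _ /imsetP[f /setIdP[fB' /andP[xf yf]] ->]; rewrite /g inE.
case: ifP => vf; last by case/andP: (boundary_glue_old fB' (negbT vf)) => ->; rewrite xf yf.
rewrite sB /=.
have /subsetP fvs := boundary_glue_new fB' vf.
move: vxy (fvs x xf) (fvs y yf); rewrite !inE negb_or => /andP[vx vy].
by rewrite eq_sym (negbTE vx) eq_sym (negbTE vy) /= => -> ->.
Qed.

Lemma glue_empty_tetrahedron :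
  empty_tetrahedron (boundary B) -> empty_tetrahedron (boundary B').
Proof.
case=> Q [cardQ clQ emptyQ]; exists Q; split=> // [x y xQ yQ | f fB'].
  exact: adj_glue_mono (clQ x y xQ yQ).
have [vf | vf] := boolP (v \in f); last first.
  by case/andP: (boundary_glue_old fB' vf) => /emptyQ.
apply/negP=> /subsetP /(_ v vf) vQ.
by move: vB; rewrite (adj_vertex (clQ v v vQ vQ)).
Qed.

Lemma glue_exposed_avoiding u : u \in s -> exposed_avoiding u B -> exposed_avoiding u B'.
Proof.
move=> us expB t /setU1P[-> | tB].
  by exists ((v |: s) :\ u); rewrite ?boundary_glue_face // subD1set setD11.
have [f fB /andP[ft uf]] := expB t tB; exists f; rewrite ?ft //.
by apply: boundary_glue_keep fB _; apply: contraNneq uf => ->.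
Qed.

End Glue.

Lemma stacked_cliques_le4 B : stacked_ball B -> cliques_le4 (boundary B).
Proof. by elim=> [t /base_cliques_le4 | B' s v _ IH sB vB] //; exact: glue_cliques_le4. Qed.

Lemma stacked_four_cycles_chorded B : stacked_ball B -> four_cycles_chorded (boundary B).
Proof.
by elim=> [t /base_four_cycles_chorded | B' s v _ IH sB vB] //; exact: glue_four_cycles_chorded.
Qed.

Lemma stacked_edge_deg_le2 B : stacked_ball B -> edge_deg_le2 (boundary B).
Proof. by elim=> [t /base_edge_deg_le2 | B' s v _ IH sB vB] //; exact: glue_edge_deg_le2. Qed.

Lemma stacked_K4_tetrahedra B : stacked_ball B -> K4_tetrahedra B.
Proof. by elim=> [t /base_K4_tetrahedra | B' s v _ IH sB vB] //; exact: glue_K4_tetrahedra. Qed.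

Lemma exposed_no_empty_tetrahedron u B :
  stacked_ball B -> exposed_avoiding u B -> ~ empty_tetrahedron (boundary B).
Proof.
move=> stB expB [Q [cardQ clQ emptyQ]].
have [f fB /andP[fQ _]] := expB Q (stacked_K4_tetrahedra stB cardQ clQ).
by move: (emptyQ f fB); rewrite fQ.
Qed.

Section Flip.
Variables (Z Y : {set {set T}}) (a b c d : T).
Hypotheses (ab : a != b) (ac : a != c) (ad : a != d) (bc : b != c) (bd : b != d) (cd : c != d).
Hypotheses (abcZ : [set a; b; c] \in Z) (abdZ : [set a; b; d] \in Z) (cdZ : ~ is_edge Z [set c; d]).
Hypothesis defY :
  Y = [set a; c; d] |: ([set b; c; d] |: ((Z :\ [set a; b; c]) :\ [set a; b; d])).

Lemma mem_flip t : (t \in Y) =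
  [|| t == [set a; c; d], t == [set b; c; d] |
      [&& t != [set a; b; d], t != [set a; b; c] & t \in Z]].
Proof. by rewrite defY !in_setU1 !in_setD1. Qed.

Lemma flip_acd : [set a; c; d] \in Y.
Proof. by rewrite mem_flip eqxx. Qed.

Lemma flip_bcd : [set b; c; d] \in Y.
Proof. by rewrite mem_flip eqxx orbT. Qed.

Lemma flip_nadj_cd : ~~ adj Z c d.
Proof.
apply/negP=> /adjP[t tZ /andP[ct dt]]; apply: cdZ; exists t => //.
by rewrite subUset !sub1set ct dt.
Qed.

Lemma flip_adj_lost x y : adj Z x y -> adj Y x y \/ [set x; y] = [set a; b].
Proof.
case/adjP=> t tZ /andP[xt yt]; have [tY | tY] := boolP (t \in Y).
  by left; exact: adj_in tY xt yt.
have [e ecd te] : exists2 e, e \in [set c; d] & t = [set a; b; e].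
  move: tY; rewrite mem_flip tZ andbT !negb_or negb_and !negbK => /and3P[_ _].
  by case/orP=> /eqP->; [exists d | exists c]; rewrite ?set21 ?set22.
have a_acd : a \in [set a; c; d] by rewrite !inE eqxx.
have b_bcd : b \in [set b; c; d] by rewrite !inE eqxx.
have e_acd : e \in [set a; c; d] by case/set2P: ecd => ->; rewrite !inE eqxx ?orbT.
have e_bcd : e \in [set b; c; d] by case/set2P: ecd => ->; rewrite !inE eqxx ?orbT.
move: xt yt; rewrite te !inE -!orbA => /or3P[]/eqP-> /or3P[]/eqP->;
  first [ by right | by right; rewrite setUC
        | by left; apply: (adj_in flip_acd) | by left; apply: (adj_in flip_bcd) ].
Qed.

Lemma flip_adj_gained x y : adj Y x y -> adj Z x y \/ [set x; y] = [set c; d].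
Proof.
case/adjP=> t; rewrite mem_flip => tY /andP[xt yt].
have [tZ | tZ] := boolP (t \in Z); first by left; exact: adj_in tZ xt yt.
have [e eab te] : exists2 e, e \in [set a; b] & t = [set e; c; d].
  move: tY; rewrite (negbTE tZ) !andbF orbF.
  by case/orP=> /eqP->; [exists a | exists b]; rewrite ?set21 ?set22.
have e_abc : e \in [set a; b; c] by case/set2P: eab => ->; rewrite !inE eqxx ?orbT.
have e_abd : e \in [set a; b; d] by case/set2P: eab => ->; rewrite !inE eqxx ?orbT.
have c_abc : c \in [set a; b; c] by rewrite !inE eqxx ?orbT.
have d_abd : d \in [set a; b; d] by rewrite !inE eqxx ?orbT.
move: xt yt; rewrite te !inE -!orbA => /or3P[]/eqP-> /or3P[]/eqP->;
  first [ by right | by right; rewrite setUC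
        | by left; apply: (adj_in abcZ) | by left; apply: (adj_in abdZ) ].
Qed.

Lemma flip_nadj_ab : edge_deg_le2 Z -> ~~ adj Y a b.
Proof.
move=> degZ; apply/negP=> /adjP[t]; rewrite mem_flip => tY /andP[a_t b_t].
have tZ : [&& t != [set a; b; d], t != [set a; b; c] & t \in Z].
  move: tY a_t b_t => /or3P[/eqP-> | /eqP-> | //]; rewrite !inE.
    by rewrite (eq_sym b a) (negbTE ab) (negbTE bc) (negbTE bd).
  by rewrite (negbTE ac) (negbTE ad) (negbTE ab).
case/and3P: tZ => tabd tabc tZ.
have abc_abd : [set a; b; c] != [set a; b; d].
  apply/eqP=> /setP/(_ d); rewrite !inE eqxx orbT ![d == _]eq_sym.
  by rewrite (negbTE ad) (negbTE bd) (negbTE cd).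
have := degZ a b ab; apply/negP; rewrite -ltnNge.
apply: (@leq_trans #|t |: [set [set a; b; c]; [set a; b; d]]|).
  by rewrite cardsU1 cards2 abc_abd !inE negb_or tabc tabd.
apply/subset_leq_card/subsetP=> f; rewrite !inE => /orP[/eqP-> | /orP[]/eqP->].
- by rewrite tZ a_t b_t.
- by rewrite abcZ !inE !eqxx orbT.
- by rewrite abdZ !inE !eqxx orbT.
Qed.

Lemma flip_empty_tetrahedron_avoiding Q : empty_tetrahedron_at Z Q ->
  ~~ ((a \in Q) && (b \in Q)) -> empty_tetrahedron_at Y Q.
Proof.
case=> cardQ clQ emptyQ abQ; split=> // [x y xQ yQ | t].
  have [// | xy_ab] := flip_adj_lost (clQ x y xQ yQ).
  case/negP: abQ; move: (set21 a b) (set22 a b); rewrite -xy_ab !inE.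
  by case/orP=> /eqP-> /orP[]/eqP->; rewrite ?xQ ?yQ.
have cdQ : ~~ ((c \in Q) && (d \in Q)).
  by apply: contra flip_nadj_cd => /andP[cQ dQ]; exact: clQ.
rewrite mem_flip => /or3P[/eqP-> | /eqP-> | /and3P[_ _ /emptyQ //]];
by apply/negP=> /subsetP sub; case/negP: cdQ; rewrite !sub // !inE eqxx ?orbT.
Qed.

Lemma flip_empty_tetrahedron_through Q : cliques_le4 Z -> edge_deg_le2 Z ->
  four_cycles_chorded Y -> empty_tetrahedron_at Z Q -> a \in Q -> b \in Q -> False.
Proof.
move=> le4Z degZ chY [cardQ clQ emptyQ] aQ bQ.
have notin_Q e : e \in [set c; d] -> e \notin Q.
  case/set2P=> ->; apply/negP=> eQ.
    by case/negP: (emptyQ _ abcZ); rewrite !subUset !sub1set aQ bQ eQ.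
  by case/negP: (emptyQ _ abdZ); rewrite !subUset !sub1set aQ bQ eQ.
case: (pickP [pred x in Q | ~~ adj Z c x]) => [x /andP[xQ cx] | adj_cQ]; last first.
  suff /le4Z : clique Z (c |: Q) by rewrite cardsU1 notin_Q ?set21 // cardQ.
  have adj_c y : y \in c |: Q -> adj Z c y.
    case/setU1P=> [-> | yQ]; first by apply: (adj_in abcZ); rewrite !inE eqxx ?orbT.
    by move: (adj_cQ y); rewrite /= yQ => /negbFE.
  move=> x y /setU1P[-> | xQ]; first exact: adj_c.
  case/setU1P=> [-> | yQ]; last exact: clQ.
  by rewrite adjC adj_c // inE xQ orbT.
have xa : x != a by apply: contraNneq cx => ->; rewrite (adj_in abcZ) // !inE eqxx ?orbT.
have xb : x != b by apply: contraNneq cx => ->; rewrite (adj_in abcZ) // !inE eqxx ?orbT.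
have lift y z : y \in Q -> z \in Q -> ~~ ((a \in [set y; z]) && (b \in [set y; z])) ->
    adj Y y z.
  move=> yQ zQ nab; case: (flip_adj_lost (clQ y z yQ zQ)) => // yz_ab.
  by rewrite yz_ab set21 set22 in nab.
have adj_ac : adj Y a c by apply: (adj_in flip_acd); rewrite !inE eqxx ?orbT.
have adj_cb : adj Y c b by apply: (adj_in flip_bcd); rewrite !inE eqxx ?orbT.
have adj_bx : adj Y b x by apply: lift; rewrite // !inE (negbTE ab) eq_sym (negbTE xa).
have adj_xa : adj Y x a.
  by apply: lift; rewrite // !inE (eq_sym b a) (negbTE ab) [b == x]eq_sym (negbTE xb) andbF.
case/orP: (chY a c b x adj_ac adj_cb adj_bx adj_xa).
  by rewrite (negbTE (flip_nadj_ab degZ)).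
case/flip_adj_gained=> [| cx_cd]; first by rewrite (negbTE cx).
have /set2P[dc | dx] : d \in [set c; x] by rewrite cx_cd set22.
  by move: cd; rewrite dc eqxx.
by move: (notin_Q d (set22 c d)); rewrite dx xQ.
Qed.

Lemma flip_empty_tetrahedron : cliques_le4 Z -> edge_deg_le2 Z ->
  four_cycles_chorded Y -> empty_tetrahedron Z -> empty_tetrahedron Y.
Proof.
move=> le4Z degZ chY [Q emptyQ]; exists Q.
have [/andP[aQ bQ] | abQ] := boolP ((a \in Q) && (b \in Q)).
  by case: (flip_empty_tetrahedron_through le4Z degZ chY emptyQ aQ bQ).
exact: flip_empty_tetrahedron_avoiding.
Qed.

End Flip.

Section Relabel.
Variable f : {perm T}.

Definition relabel S := [set [set f x | x in t] | t : {set T} in S].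

Lemma imset_permK t : [set (f^-1)%g x | x in [set f x | x in t]] = t.
Proof. by rewrite -imset_comp (eq_imset _ (permK f)) imset_id. Qed.

Lemma imset_permKV t : [set f x | x in [set (f^-1)%g x | x in t]] = t.
Proof. by rewrite -imset_comp (eq_imset _ (permKV f)) imset_id. Qed.

Lemma mem_relabel S t : ([set f x | x in t] \in relabel S) = (t \in S).
Proof. exact/mem_imset/imset_inj/perm_inj. Qed.

Lemma subset_relabel t Q : ([set f x | x in t] \subset [set f x | x in Q]) = (t \subset Q).
Proof. by apply/idP/idP=> [/(imsetS (f^-1)%g) | /(imsetS f)]; rewrite ?imset_permK. Qed.

Lemma boundary_relabel B : boundary (relabel B) = relabel (boundary B).
Proof.
apply/setP=> u; rewrite -[u]imset_permKV mem_relabel !inE (card_imset _ (@perm_inj _ f)).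
set w := [set _ | _ in u].
have -> : [set t in relabel B | [set f x | x in w] \subset t] =
    relabel [set t in B | w \subset t].
  by apply/setP=> t; rewrite -[t]imset_permKV mem_relabel !inE mem_relabel subset_relabel.
by rewrite (card_imset _ (imset_inj (@perm_inj _ f))).
Qed.

Lemma vertices_relabel B : vertices (relabel B) = [set f x | x in vertices B].
Proof.
apply/setP=> x; rewrite -[x](permKV f) (mem_imset _ _ (@perm_inj _ f)).
apply/vertP/vertP=> [[_ /imsetP[t tB ->]] | [t tB xt]].
  by rewrite (mem_imset _ _ (@perm_inj _ f)); exists t.
by exists [set f x | x in t]; rewrite ?mem_relabel ?(mem_imset _ _ (@perm_inj _ f)).
Qed.

Lemma stacked_relabel B : stacked_ball B -> stacked_ball (relabel B).
Proof.
elim=> [t cardt | B' s v _ IH sB vB].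
  by rewrite /relabel imset_set1; apply: sb_base; rewrite (card_imset _ (@perm_inj _ f)).
rewrite /relabel !imsetU1; apply: sb_glue => //.
  by rewrite boundary_relabel mem_relabel.
by rewrite vertices_relabel (mem_imset _ _ (@perm_inj _ f)).
Qed.

Lemma adj_relabel S x y : adj S x y -> adj (relabel S) (f x) (f y).
Proof.
case/adjP=> t tS /andP[xt yt]; apply: (adj_in (_ : [set f x | x in t] \in relabel S)).
- by rewrite mem_relabel.
- by rewrite (mem_imset _ _ (@perm_inj _ f)).
- by rewrite (mem_imset _ _ (@perm_inj _ f)).
Qed.

Lemma empty_tetrahedron_relabel S : empty_tetrahedron S -> empty_tetrahedron (relabel S).
Proof.
case=> Q [cardQ clQ emptyQ]; exists [set f x | x in Q]; split.
- by rewrite (card_imset _ (@perm_inj _ f)).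
- by move=> _ _ /imsetP[x xQ ->] /imsetP[y yQ ->]; exact/adj_relabel/clQ.
- by move=> _ /imsetP[t tS ->]; rewrite subset_relabel emptyQ.
Qed.

End Relabel.

Lemma relabelK (f : {perm T}) S : relabel (f^-1)%g (relabel f S) = S.
Proof.
by rewrite /relabel -imset_comp (eq_imset _ (@imset_permK f)) imset_id.
Qed.

End StackedBalls.

Lemma sphere_relabel n (f : {perm 'I_n}) S : stacked_sphere S -> stacked_sphere (relabel f S).
Proof.
case=> B stB [vB ->]; exists (relabel f B); first exact: stacked_relabel.
split; last by rewrite boundary_relabel.
rewrite vertices_relabel vB; apply/setP=> x; rewrite inE -[x](permKV f).
by rewrite (mem_imset _ _ (@perm_inj _ f)) inE.
Qed.

Lemma stacked_sphere_flip n (X X' : {set {set 'I_n}}) : stacked_sphere X -> stacked_sphere X' ->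
  flip X X' -> empty_tetrahedron X -> empty_tetrahedron X'.
Proof.
move=> [B stB [_ ->]] [B' stB' [_ defX']] [a [b [c [d [abcd abcX abdX cdX defY]]]]].
move: abcd; rewrite /= !inE !negb_or -!andbA => /and4P[ab ac ad /and4P[bc bd cd _]].
rewrite defX' in defY *; apply: (flip_empty_tetrahedron ab ac ad bc bd cd abcX abdX cdX defY).
- exact: stacked_cliques_le4.
- exact: stacked_edge_deg_le2.
- exact: stacked_four_cycles_chorded.
Qed.

Lemma Sn_adj_empty_tetrahedron n (S S' : {set {set 'I_n}}) :
  Sn_adj S S' -> empty_tetrahedron S -> empty_tetrahedron S'.
Proof.
case=> stS stS' [X [X' [[f defX] [g defX'] flipXX']]] emptyS.
have -> : S' = relabel (g^-1)%g X' by rewrite defX' relabelK.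
apply/empty_tetrahedron_relabel/(stacked_sphere_flip _ _ flipXX').
- by rewrite defX; exact: sphere_relabel.
- by rewrite defX'; exact: sphere_relabel.
- by rewrite defX; exact: empty_tetrahedron_relabel.
Qed.

Lemma Sn_connected_empty_tetrahedron n (S S' : {set {set 'I_n}}) :
  Sn_connected S S' -> empty_tetrahedron S -> empty_tetrahedron S'.
Proof. by elim=> [X Y /Sn_adj_empty_tetrahedron | // | X Y Z _ IH1 _ IH2 /IH1/IH2]. Qed.

Section Construction.
Variable k : nat.
Hypothesis k_ge7 : 7 <= k.
Local Notation V := 'I_k.+1.
Local Notation vtx i := (@inord k i).

Lemma eq_vtx (x : V) i : i <= k -> (x == vtx i) = (x == i :> nat).
Proof. by move=> ik; rewrite -(inj_eq val_inj) /= inordK. Qed.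

Ltac vtx_lia := rewrite ?inE ?eq_vtx ?inordK; lia.

Definition T0 : {set V} := [set vtx 0; vtx 1; vtx 2; vtx 3].

Definition T0_face i := T0 :\ vtx i.

Lemma card_T0 : #|T0| = 4.
Proof. by rewrite /T0 -!setUA !cardsU1 cards1; vtx_lia. Qed.

Lemma vertices_T0 : vertices [set T0] = [set x : V | x <= 3].
Proof. by rewrite /vertices big_set1; apply/setP=> x; vtx_lia. Qed.

Lemma T0_face_boundary i : i < 4 -> T0_face i \in boundary [set T0].
Proof.
move=> i4; rewrite boundary_base ?card_T0 // subsetDl andbT.
have vT0 : vtx i \in T0 by vtx_lia.
by have := cardsD1 (vtx i) T0; rewrite card_T0 vT0 add1n => -[<-].
Qed.

Lemma boundary_T0 f : f \in boundary [set T0] -> exists2 i, i < 4 & f = T0_face i.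
Proof.
rewrite boundary_base ?card_T0 // => /andP[/eqP cardf fT0].
have [z zT0 ->] := subset_setD1 fT0 (etrans card_T0 (congr1 S (esym cardf))).
by exists z; [move: zT0; vtx_lia | rewrite /T0_face inord_val].
Qed.

Fixpoint capped j : {set {set V}} :=
  if j is i.+1 then (vtx (i + 4) |: T0_face i) |: capped i else [set T0].

Lemma capped_props j : j <= 4 ->
  [/\ stacked_ball (capped j), vertices (capped j) = [set x : V | x <= j + 3],
      clique (boundary (capped j)) T0,
      forall i, j <= i < 4 -> T0_face i \in boundary (capped j) &
      forall f, f \in boundary (capped j) -> f \subset T0 ->
        exists2 i, j <= i < 4 & f = T0_face i].
Proof.
elim: j => [_ | j IH j4]; last have [stC vC clC facesC inT0C] := IH (ltnW j4).
  split; rewrite ?vertices_T0 //.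
  - exact: sb_base card_T0.
  - by move=> x y xT0 yT0; rewrite adj_base ?card_T0 ?xT0.
  - by move=> i /andP[_]; exact: T0_face_boundary.
  - by move=> f /boundary_T0[i i4 ->]; exists i.
have sC : T0_face j \in boundary (capped j) by apply: facesC; lia.
have vC' : vtx (j + 4) \notin vertices (capped j) by rewrite vC; vtx_lia.
split=> /=.
- exact: sb_glue stC sC vC'.
- by rewrite vertices_glue vC; apply/setP=> x; vtx_lia.
- by move=> x y xT0 yT0; apply: (adj_glue_mono sC vC'); exact: clC.
- move=> i ij; apply: (boundary_glue_keep sC vC'); first by apply: facesC; lia.
  by apply/eqP=> /setP/(_ (vtx j)); vtx_lia.
move=> f fC fT0; have /andP[fC' fs] : (f \in boundary (capped j)) && (f != T0_face j).
  apply: (boundary_glue_old sC vC' fC); apply: contraTN fT0 => vf.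
  by apply/subsetPn; exists (vtx (j + 4)); vtx_lia.
have [i ij fi] := inT0C f fC' fT0; exists i => //.
by move: fs ij; rewrite fi; case: (eqVneq i j) => [-> | ]; [rewrite eqxx | lia].
Qed.

Lemma capped4_props :
  [/\ stacked_ball (capped 4), vertices (capped 4) = [set x : V | x <= 7],
      [set vtx 0; vtx 1; vtx 7] \in boundary (capped 4) &
      empty_tetrahedron (boundary (capped 4))].
Proof.
have [st3 v3 _ faces3 _] := capped_props (isT : 3 <= 4).
have [st4 v4 cl4 _ inT0] := capped_props (leqnn 4).
split=> //.
  have -> : [set vtx 0; vtx 1; vtx 7] = (vtx 7 |: T0_face 3) :\ vtx 2.
    by apply/setP=> x; vtx_lia.
  by apply: boundary_glue_face; [exact: faces3 | rewrite v3; vtx_lia | vtx_lia].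
exists T0; split=> // [|f fC]; first exact: card_T0.
by apply/negP=> /(inT0 f fC)[i /andP[i4 i4']]; lia.
Qed.

Section FanExtension.
Variables (P : {set {set V}} -> Prop) (B0 : {set {set V}}) (m : nat).
Hypothesis P_glue : forall B s v, s \in boundary B -> v \notin vertices B ->
  vtx 1 \in s -> P B -> P ((v |: s) |: B).
Hypotheses (m_ge2 : 2 <= m) (stB0 : stacked_ball B0)
  (vB0 : vertices B0 = [set x : V | x <= m])
  (sB0 : [set vtx 0; vtx 1; vtx m] \in boundary B0) (PB0 : P B0).

Fixpoint fan_ext l : {set {set V}} :=
  if l is l.+1 then (vtx (m + l.+1) |: [set vtx 0; vtx 1; vtx (m + l)]) |: fan_ext l
  else B0.

Lemma fan_ext_props l : m + l <= k ->
  [/\ stacked_ball (fan_ext l), vertices (fan_ext l) = [set x : V | x <= m + l],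
      [set vtx 0; vtx 1; vtx (m + l)] \in boundary (fan_ext l) & P (fan_ext l)].
Proof.
elim: l => [_ | l IH ml]; first by rewrite addn0.
have ml' : m + l <= k by lia.
have [stE vE sE PE] := IH ml'.
have vE' : vtx (m + l.+1) \notin vertices (fan_ext l) by rewrite vE; vtx_lia.
split=> /=.
- exact: sb_glue stE sE vE'.
- by rewrite vertices_glue vE; apply/setP=> x; vtx_lia.
- have -> : [set vtx 0; vtx 1; vtx (m + l.+1)] =
      (vtx (m + l.+1) |: [set vtx 0; vtx 1; vtx (m + l)]) :\ vtx (m + l).
    by apply/setP=> x; vtx_lia.
  by apply: (boundary_glue_face sE vE'); vtx_lia.
- by apply: P_glue => //; vtx_lia.
Qed.

End FanExtension.

Lemma sphere_of_ball B : stacked_ball B -> vertices B = [set x : V | x <= k] ->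
  stacked_sphere (boundary B).
Proof.
by move=> stB vB; exists B => //; split=> //; rewrite vB; apply/setP=> x; rewrite !inE leq_ord.
Qed.

Definition capped_ball := fan_ext (capped 4) 7 (k - 7).

Definition fan_ball := fan_ext [set T0] 3 (k - 3).

Lemma capped_ball_props :
  stacked_sphere (boundary capped_ball) /\ empty_tetrahedron (boundary capped_ball).
Proof.
have [st4 v4 s4 e4] := capped4_props.
have kl : 7 + (k - 7) <= k by lia.
have [stC vC _ eC] := fan_ext_props (P := fun B => empty_tetrahedron (boundary B))
  (fun B s v sB vB _ => glue_empty_tetrahedron sB vB) (isT : 2 <= 7) st4 v4 s4 e4 kl.
by split=> //; apply: sphere_of_ball stC _; rewrite vC subnKC.
Qed.

Lemma fan_ball_props :
  stacked_sphere (boundary fan_ball) /\ ~ empty_tetrahedron (boundary fan_ball).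
Proof.
have stT0 : stacked_ball [set T0] := sb_base card_T0.
have sT0 : [set vtx 0; vtx 1; vtx 3] \in boundary [set T0].
  by rewrite (_ : [set _; _; _] = T0_face 2) ?T0_face_boundary //; apply/setP=> x; vtx_lia.
have expT0 : exposed_avoiding (vtx 1) [set T0].
  move=> _ /set1P->; exists (T0_face 1); first exact: T0_face_boundary.
  by rewrite subsetDl setD11.
have kl : 3 + (k - 3) <= k by lia.
have [stF vF _ expF] := fan_ext_props (P := exposed_avoiding (vtx 1))
  (fun B s v sB vB u1 => glue_exposed_avoiding sB vB u1) (isT : 2 <= 3)
  stT0 vertices_T0 sT0 expT0 kl.
split; last exact: exposed_no_empty_tetrahedron stF expF.
by apply: sphere_of_ball stF _; rewrite vF subnKC //; lia.
Qed.

End Construction.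

Theorem corollary4p6 (n : nat) : 8 <= n ->
  exists S S' : {set {set 'I_n}},
    [/\ stacked_sphere S, stacked_sphere S' & ~ Sn_connected S S'].
Proof.
case: n => [// | k] k_ge7.
have [capped_sphere capped_empty] := capped_ball_props k_ge7.
have [fan_sphere fan_not_empty] := fan_ball_props k_ge7.
exists (boundary (capped_ball k)), (boundary (fan_ball k)); split=> // conn.
exact/fan_not_empty/(Sn_connected_empty_tetrahedron conn).
Qed.
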